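(* Let $\Sigma$ be a finite alphabet, $p\in\Sigma^{++}$ and $\theta=\llbracket\hat p\rrbracket$. Then $p$ is regional (i.e. admits a regional homogeneous partition) if and only if both directed graphs with vertex set $\Sigma$ and edge relations $\mathcal A_\theta\cap\Sigma^2$ and $\mathcal A'_\theta\cap\Sigma^2$, respectively, are acyclic.
   Context: A picture over $\Sigma$ is a nonempty rectangular array of symbols of $\Sigma$, $\Sigma^{++}$ the set of all of them; $p(i,j)$ is the pixel in row $i$, column $j$; for $\#\notin\Sigma$, $\hat p$ is $p$ surrounded by a one-pixel frame of $\#$'s. A tile is a $2\times 2$ picture; $\llbracket q\rrbracket$ is the set of all $2\times2$ subpictures (on consecutive rows and columns) of $q$. A subdomain of $p$ is a rectangle $\{x,\dots,x'\}\times\{y,\dots,y'\}$ of positions; it is $C$-homogeneous (label $C$) if all its pixels equal $C$. A homogeneous partition of $p$ is a partition of its set of positions into homogeneous subdomains; it is regional if distinct subdomains have distinct labels; $p$ is regional if it admits a regional homogeneous partition. Adjacency relations: for a tile $t$ over $\Sigma\cup\{\#\}$ define relations $\mathcal H_t,\mathcal V_t\subseteq(\Sigma\cup\{\#\})^2$ by: for $i=1,2$, $t(i,1)\,\mathcal H_t\,t(i,2)$ iff $t(i,1)\ne t(i,2)$; for $j=1,2$, $t(1,j)\,\mathcal V_t\,t(2,j)$ iff $t(1,j)\neq t(2,j)$ (and these are the only pairs). Let $\mathcal A_t=\mathcal H_t\cup\mathcal V_t$ and $\mathcal A'_t=\mathcal H_t^{-1}\cup\mathcal V_t$. For a set $\theta$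 of tiles, $x\,\mathcal H_\theta\,y$ iff $x\,\mathcal H_t\,y$ for some $t\in\theta$, and similarly for $\mathcal V_\theta,\mathcal A_\theta,\mathcal A'_\theta$. A tile set $\theta$ for which the graphs of $\mathcal A_\theta\cap\Sigma^2$ and $\mathcal A'_\theta\cap\Sigma^2$ are both acyclic is called simple regional. *)

From mathcomp Require Import all_boot all_order all_algebra.
Set Implicit Arguments. Unset Strict Implicit. Unset Printing Implicit Defensive.

(* A picture over Sigma with m rows and n columns is a matrix 'M[Sigma]_(m,n)
   (entries p i j, rows/columns indexed from 0); nonemptiness = 0 < m, 0 < n.
   The frame symbol # is represented by None : option Sigma. *)

Section Pictures.
Variable Sigma : finType.

(* hat p, indexed by nat: rows 0..m+1, columns 0..n+1; pixel (i,j) of hat p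
   with 1 <= i <= m, 1 <= j <= n is p (i-1) (j-1); all other pixels are #. *)
Definition frame (m n : nat) (p : 'M[Sigma]_(m, n)) (i j : nat) : option Sigma :=
  if (0 < i) && (0 < j) then
    match @insub _ (fun k => k < m) 'I_m i.-1, @insub _ (fun k => k < n) 'I_n j.-1 with
    | Some i', Some j' => Some (p i' j')
    | _, _ => None
    end
  else None.

(* A tile: ((t(1,1), t(1,2)), (t(2,1), t(2,2))) over Sigma ∪ {#}. *)
Definition tile := ((option Sigma * option Sigma) * (option Sigma * option Sigma))%type.

Definition tile_at (m n : nat) (p : 'M[Sigma]_(m, n)) (i : 'I_m.+1) (j : 'I_n.+1) : tile :=
  ((frame p i j, frame p i j.+1), (frame p i.+1 j, frame p i.+1 j.+1)).

Definition in_theta (m n : nat) (p : 'M[Sigma]_(m, n)) (t : tile) : bool :=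
  [exists i : 'I_m.+1, exists j : 'I_n.+1, t == tile_at p i j].

Definition H_tile (t : tile) : rel (option Sigma) := fun a b =>
  [|| [&& a == t.1.1, b == t.1.2 & t.1.1 != t.1.2]
    | [&& a == t.2.1, b == t.2.2 & t.2.1 != t.2.2]].

Definition V_tile (t : tile) : rel (option Sigma) := fun a b =>
  [|| [&& a == t.1.1, b == t.2.1 & t.1.1 != t.2.1]
    | [&& a == t.1.2, b == t.2.2 & t.1.2 != t.2.2]].

Definition A_tile (t : tile) : rel (option Sigma) := fun a b => H_tile t a b || V_tile t a b.
Definition A'_tile (t : tile) : rel (option Sigma) := fun a b => H_tile t b a || V_tile t a b.

(* R_theta restricted to Sigma^2, for theta = [[hat p]] *)
Definition theta_rel (R : tile -> rel (option Sigma)) (m n : nat) (p : 'M[Sigma]_(m, n))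
  : rel Sigma := fun x y => [exists t : tile, in_theta p t && R t (Some x) (Some y)].

Definition A_theta m n (p : 'M[Sigma]_(m, n)) : rel Sigma := theta_rel A_tile p.
Definition A'_theta m n (p : 'M[Sigma]_(m, n)) : rel Sigma := theta_rel A'_tile p.

Definition acyclic (r : rel Sigma) : Prop :=
  forall s : seq Sigma, s != [::] -> ~~ cycle r s.

Definition subdomain (m n : nat) (D : {set 'I_m * 'I_n}) : Prop :=
  exists (x x' : 'I_m) (y y' : 'I_n), x <= x' /\ y <= y' /\
    D = [set ij : 'I_m * 'I_n | (x <= ij.1 <= x') && (y <= ij.2 <= y')].

Definition homogeneous (m n : nat) (p : 'M[Sigma]_(m, n)) (D : {set 'I_m * 'I_n})
  (C : Sigma) : Prop := forall ij, ij \in D -> p ij.1 ij.2 = C.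

Definition homogeneous_partition (m n : nat) (p : 'M[Sigma]_(m, n))
  (P : {set {set 'I_m * 'I_n}}) : Prop :=
  partition P [set: 'I_m * 'I_n] /\
  forall D, D \in P -> subdomain D /\ exists C, homogeneous p D C.

Definition regional_partition (m n : nat) (p : 'M[Sigma]_(m, n))
  (P : {set {set 'I_m * 'I_n}}) : Prop :=
  homogeneous_partition p P /\
  forall D1 D2 C1 C2, D1 \in P -> D2 \in P -> homogeneous p D1 C1 ->
    homogeneous p D2 C2 -> D1 != D2 -> C1 != C2.

Definition regional (m n : nat) (p : 'M[Sigma]_(m, n)) : Prop :=
  exists P, regional_partition p P.

End Pictures.

From mathcomp Require Import all_boot all_order all_algebra zify.
Set Implicit Arguments. Unset Strict Implicit. Unset Printing Implicit Defensive.

(* The pivot is the notion of a picture with *rectangular colour classes*: for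
   every colour c occurring in p, the set of positions of colour c is a
   subdomain.  We prove
   (1) p is regional iff its colour classes are rectangular: the blocks of a
       regional partition are exactly the colour classes, and conversely the
       colour classes form a regional partition;
   (2) rectangular classes => acyclicity: an A-edge x -> y (resp. A'-edge)
       forces the rectangle of y to reach weakly below-right (resp.
       below-left) of the rectangle of x, and this "reaches" relation is
       acyclic on any family of pairwise disjoint rectangles (a cycle can be
       shortcut at its element whose bottom row is highest);
   (3) acyclicity => rectangular classes: monotone staircase walks between
       pixels give A- (resp. A'-) paths between their colours, so a colour
       class is convex, hence equal to its bounding box. *)

Lemma seq_argmin (T : eqType) (f : T -> nat) (s : seq T) :
  s != [::] -> exists2 x, x \in s & forall y, y \in s -> f x <= f y.
Proof.
elim: s => [//|a s IH] _.
have [->|/IH [x xs xmin]] := eqVneq s [::].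
  by exists a => [|y]; rewrite ?mem_seq1 // => /eqP ->.
have [fax|fxa] := leqP (f a) (f x).
  exists a; first exact: mem_head.
  by move=> y; rewrite inE => /predU1P [->//|/xmin]; apply: leq_trans.
exists x; first by rewrite inE xs orbT.
by move=> y; rewrite inE => /predU1P [->|/xmin//]; apply: ltnW.
Qed.

Lemma cycle_rotate_min (T : eqType) (r : rel T) (f : T -> nat) (s : seq T) :
  s != [::] -> exists x t, [/\ cycle r s = cycle r (x :: t),
    size t < size s & forall y, y \in x :: t -> f x <= f y].
Proof.
move=> s_ne; have [x xs xmin] := seq_argmin f s_ne.
case/splitPr: xs xmin => s1 s2 xmin.
exists x, (s2 ++ s1); split.
- by rewrite -(rot_cycle (size s1)) rot_size_cat.
- by rewrite !size_cat /= addnS ltnS addnC.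
- by move=> y; rewrite -cat_cons mem_cat orbC -mem_cat => /xmin.
Qed.

Lemma acyclic_connect_antisym (T : finType) (r : rel T) (a b : T) :
  acyclic r -> connect r a b -> connect r b a -> a = b.
Proof.
move=> r_acyc /connectP [s1 p1 eb] /connectP [s2 p2 ea].
apply/eqP; apply: contraT => ab.
have walk : path r a (s1 ++ s2) by rewrite cat_path p1 -eb p2.
have back : last a (s1 ++ s2) = a by rewrite last_cat -eb -ea.
case: s1 p1 eb walk back => [|x s1] _ eb; first by rewrite eb eqxx in ab.
rewrite cat_cons lastI last_rcons => walk back.
by have := r_acyc (a :: belast x (s1 ++ s2)) isT; rewrite /= -{2}back walk.
Qed.

Lemma connect_image (T T' : finType) (f : T -> T') (e : rel T) (r : rel T') :
  (forall u v, e u v -> f u != f v -> r (f u) (f v)) ->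
  forall u v, connect e u v -> connect r (f u) (f v).
Proof.
move=> fe u v /connectP [s]; elim: s u => [|w s IH] u /=; first by move=> _ ->.
case/andP=> euw pw lw; apply: connect_trans (IH w pw lw) => //.
by have [->|ne] := eqVneq (f u) (f w); [exact: connect0 | exact/connect1/fe].
Qed.

Lemma connect_ord_walk (T : finType) (e : rel T) (k : nat) (g : 'I_k -> T) :
  (forall i j : 'I_k, i.+1 = j :> nat -> e (g i) (g j)) ->
  forall i j : 'I_k, i <= j -> connect e (g i) (g j).
Proof.
move=> step i [j lt_jk]; elim: j lt_jk => [|j IH] lt_jk le_ij.
  by rewrite (_ : i = Ordinal lt_jk) ?connect0 //; apply/val_inj/eqP; rewrite -leqn0.
have [eij|lt_ij] := eqVneq (i : nat) j.+1.
  by rewrite (_ : i = Ordinal lt_jk) ?connect0 //; apply: val_inj.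
apply: connect_trans (IH (ltnW lt_jk) _) (connect1 (step _ _ _)) => //.
by rewrite -ltnS ltn_neqAle lt_ij.
Qed.

Section DisjointRectangles.
Variables (T : eqType) (S : pred T) (lo1 hi1 lo2 hi2 : T -> nat).
Hypothesis rect_nonempty : forall x, S x -> (lo1 x <= hi1 x) && (lo2 x <= hi2 x).
Hypothesis rect_separated : forall x y, S x -> S y -> x != y ->
  [|| hi1 x < lo1 y, hi1 y < lo1 x, hi2 x < lo2 y | hi2 y < lo2 x].

Definition reaches : rel T := fun x y =>
  [&& S x, S y, x != y, lo1 x <= hi1 y & lo2 x <= hi2 y].

Lemma reaches_asym x y : reaches x y -> ~~ reaches y x.
Proof.
case/and5P=> Sx Sy xy xy1 xy2; apply/negP => /and5P [_ _ _ yx1 yx2].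
by have := rect_separated Sx Sy xy; lia.
Qed.

Lemma reaches_shortcut x y z : reaches y x -> reaches x z ->
  hi1 x <= hi1 y -> hi1 x <= hi1 z -> y != z -> reaches y z.
Proof.
case/and5P=> Sy Sx yx yx1 yx2 /and5P [_ Sz _ xz1 xz2] min_y min_z yz.
have x_ne := rect_nonempty Sx; have y_ne := rect_nonempty Sy.
have := rect_separated Sx Sy; rewrite eq_sym yx => /(_ isT) sep.
by rewrite /reaches Sy Sz yz /=; lia.
Qed.

Lemma reaches_no_cycle (s : seq T) : s != [::] -> ~~ cycle reaches s.
Proof.
elim: {s}(size s) {-2}s (leqnn (size s)) => [|N IH] s.
  by rewrite leqn0 => /nilP ->.
move=> size_s s_ne; apply/negP.
have [x [[|z t] [-> size_t xmin]]] := cycle_rotate_min reaches hi1 s_ne.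
  by rewrite /= /reaches eqxx !andbF.
rewrite /= rcons_path => /and3P [xz zt yx]; set y := last z t in yx.
have yzt : y \in z :: t by exact: mem_last.
have [eyz|yz] := eqVneq y z; first by move: (reaches_asym xz); rewrite -eyz yx.
have yz_edge : reaches y z.
  by apply: reaches_shortcut yx xz _ _ yz; apply: xmin; rewrite inE ?yzt ?mem_head orbT.
have size_zt : size (z :: t) <= N by move: size_s size_t; lia.
by have := IH (z :: t) size_zt isT; rewrite /= rcons_path zt yz_edge.
Qed.

Lemma reaches_acyclic (r : rel T) :
  subrel r reaches -> forall s, s != [::] -> ~~ cycle r s.
Proof.
by move=> r_sub s s_ne; apply: contraNN (reaches_no_cycle s_ne); apply: sub_cycle.
Qed.

End DisjointRectangles.

Section Pixels.
Variables (Sigma : finType) (m n : nat) (p : 'M[Sigma]_(m, n)).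
Local Notation pos := ('I_m * 'I_n)%type.

Definition color (k : pos) : Sigma := p k.1 k.2.

(* Weak geometric orders on positions (rows grow downwards). *)
Definition below_right (u v : pos) : bool := (u.1 <= v.1) && (u.2 <= v.2).
Definition below_left (u v : pos) : bool := (u.1 <= v.1) && (v.2 <= u.2).

Definition right_step : rel pos := fun u v => (u.1 == v.1 :> nat) && (u.2.+1 == v.2).
Definition down_step : rel pos := fun u v => (u.1.+1 == v.1) && (u.2 == v.2 :> nat).

Lemma connect_row (e : rel pos) : subrel right_step e ->
  forall (i : 'I_m) (j j' : 'I_n), j <= j' -> connect e (i, j) (i, j').
Proof.
move=> sub i; apply: (connect_ord_walk (g := fun j => (i, j))) => j j' jj'.
by apply: sub; rewrite /right_step /= jj' !eqxx.
Qed.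

Lemma connect_col (e : rel pos) : subrel down_step e ->
  forall (i i' : 'I_m) (j : 'I_n), i <= i' -> connect e (i, j) (i', j).
Proof.
move=> sub i i' j; apply: (connect_ord_walk (g := fun i => (i, j))) => {}i {}i' ii'.
by apply: sub; rewrite /down_step /= ii' !eqxx.
Qed.

Lemma connect_below_right (e : rel pos) :
  subrel right_step e -> subrel down_step e ->
  forall u v, below_right u v -> connect e u v.
Proof.
move=> right down [i j] [i' j'] /andP /= [ii' jj'].
exact: connect_trans (connect_row right i jj') (connect_col down j' ii').
Qed.

Lemma connect_below_left (e : rel pos) :
  subrel [rel u v | right_step v u] e -> subrel down_step e ->
  forall u v, below_left u v -> connect e u v.
Proof.
move=> left down [i j] [i' j'] /andP /= [ii' j'j].
apply: connect_trans _ (connect_col down j' ii'); rewrite -[connect e _ _]connect_rev.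
by apply: connect_row j'j => u v /left.
Qed.

Lemma frame_color (k : pos) : frame p k.1.+1 k.2.+1 = Some (color k).
Proof.
rewrite /frame /=.
case: (@insubP _ (fun k => k < m) 'I_m k.1) => [i _ ei|]; last by rewrite ltn_ord.
case: (@insubP _ (fun k => k < n) 'I_n k.2) => [j _ ej|]; last by rewrite ltn_ord.
by rewrite /color; congr (Some (p _ _)); apply: val_inj.
Qed.

Lemma frame_someP i j x : frame p i j = Some x ->
  exists k : pos, [/\ color k = x, k.1.+1 = i & k.2.+1 = j].
Proof.
rewrite /frame; case: i => [|i]; case: j => [|j] //=.
case: (@insubP _ (fun k => k < m) 'I_m i) => [i' _ ei|_];
case: (@insubP _ (fun k => k < n) 'I_n j) => [j' _ ej|_] //= [<-].
by exists (i', j'); rewrite /= ei ej.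
Qed.

Definition pixel_tile (k : pos) : tile Sigma :=
  tile_at p (Ordinal (ltn_ord k.1 : k.1.+1 < m.+1))
            (Ordinal (ltn_ord k.2 : k.2.+1 < n.+1)).

Lemma pixel_tile_in (k : pos) : in_theta p (pixel_tile k).
Proof.
by apply/existsP; exists (Ordinal (ltn_ord k.1 : k.1.+1 < m.+1));
   apply/existsP; exists (Ordinal (ltn_ord k.2 : k.2.+1 < n.+1)).
Qed.

Lemma A_theta_step u v : right_step u v || down_step u v ->
  color u != color v -> A_theta p (color u) (color v).
Proof.
move=> step uv; apply/existsP; exists (pixel_tile u).
rewrite pixel_tile_in /A_tile /H_tile /V_tile /= frame_color.
by case/orP: step => /andP [/eqP e1 /eqP e2];
  rewrite e1 e2 frame_color /= !eqxx (inj_eq (@Some_inj _)) uv ?orbT.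
Qed.

Lemma A'_theta_step u v : right_step v u || down_step u v ->
  color u != color v -> A'_theta p (color u) (color v).
Proof.
case/orP=> [/andP [/eqP e1 /eqP e2] | /andP [/eqP e1 /eqP e2]] uv; apply/existsP.
  exists (pixel_tile v); rewrite pixel_tile_in /A'_tile /H_tile /= frame_color.
  by rewrite e1 e2 frame_color /= !eqxx (inj_eq (@Some_inj _)) eq_sym uv.
exists (pixel_tile u); rewrite pixel_tile_in /A'_tile /V_tile /= frame_color.
by rewrite e1 e2 frame_color /= !eqxx (inj_eq (@Some_inj _)) uv !orbT.
Qed.

Lemma connect_A_theta u v : below_right u v ->
  connect (A_theta p) (color u) (color v).
Proof.
move=> uv; apply: (connect_image (e := [rel u v | right_step u v || down_step u v])).
  exact: A_theta_step.
by apply: connect_below_right uv => x y /= ->; rewrite ?orbT.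
Qed.

Lemma connect_A'_theta u v : below_left u v ->
  connect (A'_theta p) (color u) (color v).
Proof.
move=> uv; apply: (connect_image (e := [rel u v | right_step v u || down_step u v])).
  exact: A'_theta_step.
by apply: connect_below_left uv => x y /= ->; rewrite ?orbT.
Qed.

Lemma A_theta_pixels x y : A_theta p x y -> x != y /\
  exists u v, [/\ color u = x, color v = y & below_right u v].
Proof.
case/existsP=> t /andP [/existsP [i /existsP [j /eqP ->]]].
rewrite /A_tile /H_tile /V_tile /=.
case/orP=> [/orP [] | /orP []] /and3P [/eqP e1 /eqP e2 ne];
  (split; first by apply: contra_neq ne => exy; rewrite -e1 -e2 exy);
  have [u [cu ui uj]] := frame_someP (esym e1);
  have [v [cv vi vj]] := frame_someP (esym e2);
  by exists u, v; split=> //; rewrite /below_right; lia.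
Qed.

Lemma A'_theta_pixels x y : A'_theta p x y -> x != y /\
  exists u v, [/\ color u = x, color v = y & below_left u v].
Proof.
case/existsP=> t /andP [/existsP [i /existsP [j /eqP ->]]].
rewrite /A'_tile /H_tile /V_tile /=.
case/orP=> [/orP [] | /orP []] /and3P [/eqP e1 /eqP e2 ne];
  (split; first by apply: contra_neq ne => exy; rewrite -e1 -e2 exy);
  have [u [cu ui uj]] := frame_someP (esym e1);
  have [v [cv vi vj]] := frame_someP (esym e2);
  first [by exists u, v; split=> //; rewrite /below_left; lia
        | by exists v, u; split=> //; rewrite /below_left; lia].
Qed.

End Pixels.

Section ColorClasses.
Variables (Sigma : finType) (m n : nat) (p : 'M[Sigma]_(m, n)).
Local Notation pos := ('I_m * 'I_n)%type.
Local Notation color := (color p).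

Definition color_class (c : Sigma) : {set pos} := [set k | color k == c].

Definition rectangular_classes : Prop :=
  forall k : pos, subdomain (color_class (color k)).

Lemma mem_color_class (k : pos) : k \in color_class (color k).
Proof. by rewrite inE. Qed.

Lemma color_class_homogeneous c : homogeneous p (color_class c) c.
Proof. by move=> k; rewrite inE => /eqP. Qed.

Lemma homogeneous_label D C k : homogeneous p D C -> k \in D -> C = color k.
Proof. by move=> hD kD; rewrite /color (hD k kD). Qed.

(* In a regional partition the block of a pixel is its whole colour class. *)
Lemma regional_rectangular : regional p -> rectangular_classes.
Proof.
case=> P [[/and3P [/eqP coverP _ _] domP] regP] k0.
have blockP k : pblock P k \in P /\ k \in pblock P k.
  by rewrite pblock_mem ?mem_pblock coverP inE.
have [Pk0 k0B] := blockP k0; have [_ [C0 hC0]] := domP _ Pk0.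
suff -> : color_class (color k0) = pblock P k0 by have [] := domP _ Pk0.
apply/setP => k; rewrite inE; apply/eqP/idP => [ck | kB]; last first.
  by rewrite -(homogeneous_label hC0 kB) (homogeneous_label hC0 k0B).
have [Pk kB] := blockP k; have [_ [C hC]] := domP _ Pk.
have [-> //|ne] := eqVneq (pblock P k0) (pblock P k).
have := regP _ _ _ _ Pk0 Pk hC0 hC ne.
by rewrite (homogeneous_label hC0 k0B) (homogeneous_label hC kB) ck eqxx.
Qed.

Lemma rectangular_regional : rectangular_classes -> regional p.
Proof.
move=> rect; exists (preim_partition color [set: pos]).
have blockP D : D \in preim_partition color [set: pos] ->
    exists k, D = color_class (color k).
  by case/imsetP=> k _ ->; exists k; apply/setP => k'; rewrite !inE eq_sym.
split; first split; first exact: preim_partitionP.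
  move=> D /blockP [k ->]; split; first exact: rect.
  by exists (color k); apply: color_class_homogeneous.
move=> D1 D2 C1 C2 /blockP [k1 ->] /blockP [k2 ->] h1 h2; apply: contraNneq.
rewrite (homogeneous_label h1 (mem_color_class k1)).
by rewrite (homogeneous_label h2 (mem_color_class k2)) => ->.
Qed.

Section BoundingBoxes.
Hypothesis rect : rectangular_classes.

Definition box_set (b : ('I_m * 'I_m) * ('I_n * 'I_n)) : {set pos} :=
  [set ij : pos | (b.1.1 <= ij.1 <= b.1.2) && (b.2.1 <= ij.2 <= b.2.2)].

Definition class_box (c : Sigma) := [pick b | color_class c == box_set b].
Definition lo1 c : nat := if class_box c is Some b then b.1.1 else 0.
Definition hi1 c : nat := if class_box c is Some b then b.1.2 else 0.
Definition lo2 c : nat := if class_box c is Some b then b.2.1 else 0.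
Definition hi2 c : nat := if class_box c is Some b then b.2.2 else 0.

Definition occurs (c : Sigma) : bool := [exists k, color k == c].

Lemma occurs_color k : occurs (color k).
Proof. by apply/existsP; exists k. Qed.

Lemma pos_lt (k : pos) : (k.1 < m) && (k.2 < n).
Proof. by rewrite !ltn_ord. Qed.

Lemma class_boxP k0 k : (color k == color k0) =
  (lo1 (color k0) <= k.1 <= hi1 (color k0)) && (lo2 (color k0) <= k.2 <= hi2 (color k0)).
Proof.
have [x [x' [y [y' [_ [_ eD]]]]]] := rect k0.
rewrite /lo1 /hi1 /lo2 /hi2 /class_box; case: pickP => [b /eqP eb | none].
  by move/setP: eb => /(_ k); rewrite !inE.
by have := none ((x, x'), (y, y')); rewrite eD eqxx.
Qed.

Lemma class_box_mem k :
  (lo1 (color k) <= k.1 <= hi1 (color k)) && (lo2 (color k) <= k.2 <= hi2 (color k)).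
Proof. by rewrite -class_boxP. Qed.

Lemma class_box_nonempty c : occurs c -> (lo1 c <= hi1 c) && (lo2 c <= hi2 c).
Proof. by case/existsP=> k /eqP <-; have := class_box_mem k; lia. Qed.

(* The rectangles of two distinct colours are disjoint: otherwise the corner
   (max lo1, max lo2) of their intersection would carry both colours. *)
Lemma class_boxes_separated x y : occurs x -> occurs y -> x != y ->
  [|| hi1 x < lo1 y, hi1 y < lo1 x, hi2 x < lo2 y | hi2 y < lo2 x].
Proof.
case/existsP=> kx /eqP <-; case/existsP=> ky /eqP <- xy; apply: contraT => overlap.
have in_kx := class_box_mem kx; have in_ky := class_box_mem ky.
have kx_lt := pos_lt kx; have ky_lt := pos_lt ky.
have r_lt : maxn (lo1 (color kx)) (lo1 (color ky)) < m by lia.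
have c_lt : maxn (lo2 (color kx)) (lo2 (color ky)) < n by lia.
pose corner : pos := (Ordinal r_lt, Ordinal c_lt).
have corner_x : color corner == color kx by rewrite class_boxP /=; lia.
have corner_y : color corner == color ky by rewrite class_boxP /=; lia.
by rewrite -(eqP corner_x) -(eqP corner_y) eqxx in xy.
Qed.

(* An A-edge x -> y lets the rectangle of y reach that of x. *)
Lemma rectangular_A_acyclic : acyclic (A_theta p).
Proof.
move=> s; apply: (reaches_acyclic class_box_nonempty class_boxes_separated).
move=> x y /A_theta_pixels [xy [u [v [cu cv /andP [uv1 uv2]]]]]; subst x y.
have := class_box_mem u; have := class_box_mem v.
by rewrite /reaches !occurs_color xy /=; lia.
Qed.

(* For A'-edges the same holds after mirroring the columns, c |-> n - c. *)
Lemma rectangular_A'_acyclic : acyclic (A'_theta p).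
Proof.
move=> s; apply: (@reaches_acyclic _ occurs lo1 hi1
                    (fun c => n - hi2 c) (fun c => n - lo2 c)).
- by move=> c /class_box_nonempty; lia.
- move=> x y ox oy xy; have := class_boxes_separated ox oy xy.
  case/existsP: ox => kx /eqP <-; case/existsP: oy => ky /eqP <-.
  by have := class_box_mem kx; have := class_box_mem ky; have := pos_lt kx;
     have := pos_lt ky; lia.
move=> x y /A'_theta_pixels [xy [u [v [cu cv /andP [uv1 uv2]]]]]; subst x y.
have := class_box_mem u; have := class_box_mem v; have := pos_lt u.
by rewrite /reaches !occurs_color xy /=; lia.
Qed.

End BoundingBoxes.

Definition between (a x b : nat) : bool := (a <= x <= b) || (b <= x <= a).

Lemma between_le a x b : a <= x -> x <= b -> between a x b.
Proof. by rewrite /between => -> ->. Qed.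

Lemma between_l a b : between a a b.
Proof. by rewrite /between; lia. Qed.

Lemma between_r a x : between a x x.
Proof. by rewrite /between; lia. Qed.

Definition convex_classes : Prop := forall u v w : pos, color u = color v ->
  between u.1 w.1 v.1 -> between u.2 w.2 v.2 -> color w = color u.

(* A pixel w of another colour inside the box of u and v would lie on a
   staircase u -> w -> v, yielding a cycle in A_theta or A'_theta. *)
Lemma acyclic_convex : acyclic (A_theta p) -> acyclic (A'_theta p) -> convex_classes.
Proof.
move=> hA hA' u v w; wlog le_uv : u v / u.1 <= v.1.
  move=> gen euv r c; have [uv|/ltnW vu] := leqP u.1 v.1; first exact: gen uv euv r c.
  by rewrite euv; apply: (gen v u); rewrite // /between orbC.
move=> euv; rewrite /between => r /orP [] c.
- apply: (acyclic_connect_antisym hA).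
    by rewrite euv; apply: connect_A_theta; rewrite /below_right; lia.
  by apply: connect_A_theta; rewrite /below_right; lia.
- apply: (acyclic_connect_antisym hA').
    by rewrite euv; apply: connect_A'_theta; rewrite /below_left; lia.
  by apply: connect_A'_theta; rewrite /below_left; lia.
Qed.

(* A convex colour class is its bounding box: a position w of the box is
   reached through the pixel z on the row of the leftmost pixel, in the
   column of w. *)
Lemma convex_rectangular : convex_classes -> rectangular_classes.
Proof.
move=> convex k0; set c := color k0.
pose in_c (k : pos) := color k == c; have ck0 : in_c k0 by rewrite /in_c.
have [r0 /eqP cr0 r0_min] := arg_minnP (P := in_c) (fun k : pos => k.1 : nat) ck0.
have [r1 /eqP cr1 r1_max] := arg_maxnP (P := in_c) (fun k : pos => k.1 : nat) ck0.
have [c0 /eqP cc0 c0_min] := arg_minnP (P := in_c) (fun k : pos => k.2 : nat) ck0.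
have [c1 /eqP cc1 c1_max] := arg_maxnP (P := in_c) (fun k : pos => k.2 : nat) ck0.
exists r0.1, r1.1, c0.2, c1.2; split; first exact: r0_min (introT eqP cr1).
split; first exact: c0_min (introT eqP cc1).
apply/setP => w; rewrite !inE /=; apply/idP/idP => [cw | box_w].
  have /= := r0_min w cw; have /= := r1_max w cw.
  by have /= := c0_min w cw; have /= := c1_max w cw; lia.
case/and3P: box_w => /andP [r0_w w_r1] c0_w w_c1.
pose z : pos := (c0.1, w.2).
have cz : color z = c.
  rewrite (convex c0 c1 z) ?cc0 ?cc1 //; first exact: between_l.
  exact: between_le.
have [le_wz|lt_zw] := leqP w.1 z.1.
  by rewrite (convex r0 z w) ?cr0 ?cz ?between_r // between_le ?r0_w.
by rewrite (convex z r1 w) ?cz ?cr1 ?between_l // between_le ?(ltnW lt_zw).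
Qed.

End ColorClasses.

Theorem proposition3 (Sigma : finType) (m n : nat) (p : 'M[Sigma]_(m, n)) :
  0 < m -> 0 < n ->
  (regional p <-> acyclic (A_theta p) /\ acyclic (A'_theta p)).
Proof.
move=> _ _; split.
  by move/regional_rectangular => rect; split;
    [exact: rectangular_A_acyclic | exact: rectangular_A'_acyclic].
case=> hA hA'; apply: rectangular_regional.
exact: convex_rectangular (acyclic_convex hA hA').
Qed.
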